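(* Let $\omega\ge2$ and let $\Gamma$ be an $\omega$-clique regular finite simple graph with $m$ cliques of order $\omega$, listed as $c_1,\dots,c_m$. Let $A_C$ be the adjacency matrix of $C_\omega(\Gamma)$ with vertices ordered $c_1,\dots,c_m$, and let $A_L$ be the adjacency matrix of the line graph $L(\Gamma)$ with the edges ordered $e_1,\dots,e_{m\binom{\omega}{2}}$ so that, for each $i$, the edges $e_{(i-1)\binom{\omega}{2}+1},\dots,e_{i\binom{\omega}{2}}$ are exactly the edges of the clique $c_i$. Let $\tilde A=6\binom{\omega}{3}I_m+(\omega-1)^2A_C$, and let $\varphi:\mathbb{R}^m\to\mathbb{R}^{m\binom{\omega}{2}}$ map $(a_1,\dots,a_m)^T$ to the vector obtained by repeating each coordinate $a_i$ consecutively $\binom{\omega}{2}$ times. Then for all $v\in\mathbb{R}^m$, \[v^T\tilde A v=\varphi(v)^T A_L\,\varphi(v).\]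
   Context: A graph is $\omega$-clique regular if it has a nonempty edge set and every edge lies in exactly one clique of order $\omega$ (so the edge sets of the $\omega$-cliques partition the edge set). $C_\omega(\Gamma)$ has as vertices the cliques of order $\omega$, two distinct ones adjacent iff they have nonempty intersection. $L(\Gamma)$ is the line graph (vertices = edges of $\Gamma$, adjacent iff sharing an endpoint). *)

From HB Require Import structures.
From mathcomp Require Import all_boot all_order all_algebra.
Set Implicit Arguments. Unset Strict Implicit. Unset Printing Implicit Defensive.
Import Order.TTheory GRing.Theory Num.Theory.
Local Open Scope ring_scope.

Section Graph.
Variables (T : finType) (adj : rel T).

Definition simple_graph := symmetric adj /\ irreflexive adj.

Definition is_complete (Q : {set T}) : bool :=
  [forall x in Q, forall y in Q, (x != y) ==> adj x y].

Definition is_clique_of_order (w : nat) (Q : {set T}) : bool :=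
  (#|Q| == w)%N && is_complete Q.

Definition is_edge (E : {set T}) : bool := (#|E| == 2)%N && is_complete E.

Definition clique_regular (w : nat) : Prop :=
  (exists x y, adj x y) /\
  forall E : {set T}, is_edge E ->
    #|[set Q : {set T} | is_clique_of_order w Q & E \subset Q]| = 1%N.
End Graph.

Lemma blk_lt (m k : nat) (j : 'I_(m * k)) : (j %/ k < m)%N.
Proof.
have := ltn_ord j; move: (nat_of_ord j) => n; clear j.
case: k => [|k]; first by rewrite muln0.
by rewrite ltn_divLR.
Qed.

(* block index of j : the i with (i-1)k < j <= ik in 1-based indexing *)
Definition blk (m k : nat) (j : 'I_(m * k)) : 'I_m := Ordinal (blk_lt j).

Definition phi (R : Type) (m k : nat) (v : 'cV[R]_m) : 'cV[R]_(m * k) :=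
  \col_(j < m * k) v (blk j) 0.

Definition inter_adj_mx (R : nzRingType) (T : finType) (n : nat)
  (c : 'I_n -> {set T}) : 'M[R]_n :=
  \matrix_(i, i') ((i != i') && (c i :&: c i' != set0))%:R.

(* If the members S_i of a
   family of s-sets pairwise meet in at most one point, the matrix with entries
   [i != j and S_i meets S_j] is N N^T - s I for the point/set incidence matrix N, so
   x^T A x = \sum_t (\sum_i x_i [t \in S_i])^2 - s \sum_i x_i^2.  Cliques of order w
   meet in at most one vertex since an edge lies in a single w-clique.  A vertex t of
   c_i lies on w - 1 edges of c_i, so for phi(v) each inner sum over edges is w - 1 times
   the inner sum over cliques, and phi(v) has squared norm C(w,2) \sum_i v_i^2.  What
   remains is the identity 6 C(w,3) + 2 C(w,2) = (w - 1)^2 w. *)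

From HB Require Import structures.
From mathcomp Require Import all_boot all_order all_algebra.
From mathcomp Require Import ring zify.
Set Implicit Arguments.
Unset Strict Implicit.
Unset Printing Implicit Defensive.
Import Order.TTheory GRing.Theory Num.Theory.
Local Open Scope ring_scope.

Lemma card_blk (m k : nat) (i : 'I_m) :
  #|[set j : 'I_(m * k) | blk j == i]| = k.
Proof.
have lt_shift (a : 'I_k) : (i * k + a < m * k)%N.
  by rewrite (leq_trans (_ : _ < i * k + k)%N) ?ltn_add2l // -mulSnr leq_mul2r ltn_ord orbT.
pose shift a := Ordinal (lt_shift a).
have shift_inj : injective shift by move=> a b [] /addnI /val_inj.
rewrite -[RHS]card_ord -(card_imset _ shift_inj); apply: eq_card => j.
rewrite inE; apply/eqP/imsetP => [ji|[a _ ->]]; last first.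
  by apply/val_inj; rewrite /= divnMDl ?divn_small ?addn0 // (leq_ltn_trans _ (ltn_ord a)).
have k_gt0 : (0 < k)%N.
  by have := ltn_ord j; move: (nat_of_ord j) => n; rewrite lt0n; apply: contraTneq => ->; rewrite muln0.
exists (Ordinal (ltn_pmod j k_gt0)) => //.
by apply/val_inj; rewrite /= -ji [in LHS](divn_eq j k).
Qed.

Lemma sum_blk (R : nzSemiRingType) (m k : nat) (g : 'I_m -> R) :
  \sum_(j : 'I_(m * k)) g (blk j) = (\sum_i g i) *+ k.
Proof.
rewrite (partition_big (@blk m k) predT) //= -sumrMnl; apply: eq_bigr => i _.
rewrite (eq_bigr (fun=> g i)) => [|j /eqP -> //].
by rewrite sumr_const -cardsE card_blk.
Qed.

Lemma mx_quadE (R : comNzRingType) n (M : 'M[R]_n) (x : 'cV[R]_n) :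
  (x^T *m M *m x) 0 0 = \sum_i \sum_j x i 0 * M i j * x j 0.
Proof.
rewrite mxE exchange_big /=; apply: eq_bigr => j _.
by rewrite mxE big_distrl /=; apply: eq_bigr => i _; rewrite mxE.
Qed.

Lemma mx_quad_scalarD (R : comNzRingType) n (a b : R) (M : 'M[R]_n) (x : 'cV[R]_n) :
  (x^T *m (a%:M + b *: M) *m x) 0 0 = a * \sum_i x i 0 ^+ 2 + b * (x^T *m M *m x) 0 0.
Proof.
rewrite mulmxDr mulmxDl mul_mx_scalar -scalemxAr -!scalemxAl !mxE; congr (_ * _ + _).
by apply: eq_bigr => i _; rewrite !mxE.
Qed.

Section IntersectionForm.
Variables (R : comNzRingType) (T : finType) (n : nat) (S : 'I_n -> {set T}).

Lemma natr_cardI (A B : {set T}) :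
  #|A :&: B|%:R = \sum_t (t \in A)%:R * (t \in B)%:R :> R.
Proof.
rewrite -sum1_card natr_sum big_mkcond /=; apply: eq_bigr => t _.
by rewrite inE; case: (t \in A); case: (t \in B); rewrite ?mulr1 ?mulr0.
Qed.

Lemma quad_cardI (x : 'I_n -> R) :
  \sum_i \sum_j x i * #|S i :&: S j|%:R * x j =
  \sum_t (\sum_i x i * (t \in S i)%:R) ^+ 2.
Proof.
under eq_bigr => i _ do under eq_bigr => j _ do
  rewrite natr_cardI mulr_sumr mulr_suml.
under eq_bigr => i _ do rewrite exchange_big /=.
rewrite exchange_big /=; apply: eq_bigr => t _.
rewrite expr2 mulr_suml; apply: eq_bigr => i _; rewrite mulr_sumr; apply: eq_bigr => j _.
by ring.
Qed.

Hypothesis S_cardI_le1 : forall i j, i != j -> (#|S i :&: S j| <= 1)%N.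

Lemma inter_adj_mxE i j :
  inter_adj_mx R S i j = #|S i :&: S j|%:R - (i == j)%:R * #|S i|%:R.
Proof.
rewrite mxE; have [<-|ij] := eqVneq i j; first by rewrite setIid mul1r subrr.
by rewrite mul0r subr0 -cards_eq0; case: #|_| (S_cardI_le1 ij) => [|[]].
Qed.

Lemma quad_inter_adj_mx (s : nat) (x : 'cV[R]_n) :
  (forall i, #|S i| = s) ->
  (x^T *m inter_adj_mx R S *m x) 0 0 =
  \sum_t (\sum_i x i 0 * (t \in S i)%:R) ^+ 2 - s%:R * \sum_i x i 0 ^+ 2.
Proof.
move=> S_card; rewrite mx_quadE -quad_cardI mulr_sumr -sumrB; apply: eq_bigr => i _.
under eq_bigr do rewrite inter_adj_mxE S_card mulrBr mulrBl.
rewrite sumrB; congr (_ - _).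
rewrite (bigD1 i) //= big1 ?addr0 => [|j /negPf ji]; last by rewrite eq_sym ji mul0r mulr0 mul0r.
by rewrite eqxx mul1r; ring.
Qed.

End IntersectionForm.

Lemma cardI_lt_neq (T : finType) (s : nat) (A B : {set T}) :
  #|A| = s -> #|B| = s -> A != B -> (#|A :&: B| < s)%N.
Proof.
move=> A_s B_s; apply: contraNT; rewrite -leqNgt => le_s_AB.
have AIB : A :&: B = A by apply/eqP; rewrite eqEcard subsetIl A_s.
by rewrite eqEcard A_s B_s leqnn andbT -AIB subsetIr.
Qed.

Lemma cards2_mem (T : finType) (E : {set T}) (x : T) :
  #|E| = 2%N -> x \in E -> exists2 y, y != x & E = [set x; y].
Proof.
move/eqP/cards2P=> [a [b [ab ->]]]; rewrite !inE => /orP[]/eqP->.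
  by exists b; rewrite 1?eq_sym.
by exists a; rewrite 1?setUC.
Qed.

Section Cliques.
Variables (T : finType) (adj : rel T).

Lemma complete_subset (A B : {set T}) :
  is_complete adj B -> A \subset B -> is_complete adj A.
Proof.
move=> /forallP complB /subsetP sAB; apply/forallP => x; apply/implyP => xA.
have /implyP/(_ (sAB x xA))/forallP complBx := complB x.
by apply/forallP => y; apply/implyP => yA; apply: (implyP (complBx y)); apply: sAB.
Qed.

Lemma edge_of_complete (Q : {set T}) x y :
  is_complete adj Q -> x \in Q -> y \in Q -> x != y -> is_edge adj [set x; y].
Proof.
move=> complQ xQ yQ xy; rewrite /is_edge cards2 xy /=.
by apply: complete_subset complQ _; rewrite subUset !sub1set xQ yQ.
Qed.

Lemma cardI_cliques_le1 (w : nat) (Q1 Q2 : {set T}) :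
  clique_regular adj w -> is_clique_of_order adj w Q1 -> is_clique_of_order adj w Q2 ->
  Q1 != Q2 -> (#|Q1 :&: Q2| <= 1)%N.
Proof.
move=> [_ regular] clQ1 clQ2; apply: contraNT; rewrite -ltnNge => /card_gt1P[x [y []]].
rewrite !inE => /andP[xQ1 xQ2] /andP[yQ1 yQ2] xy.
have /andP[_ complQ1] := clQ1.
have Exy := edge_of_complete complQ1 xQ1 yQ1 xy.
have /eqP/cards1P[Q /setP cliques_xy] := regular _ Exy.
have in_cliques_xy Q' : is_clique_of_order adj w Q' -> x \in Q' -> y \in Q' -> Q' = Q.
  by move=> clQ' xQ' yQ'; apply/set1P; rewrite -cliques_xy inE clQ' subUset !sub1set xQ' yQ'.
by rewrite (in_cliques_xy Q1) // (in_cliques_xy Q2).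
Qed.

Section CliqueBlocks.
Variables (w m k : nat) (c : 'I_m -> {set T}) (f : 'I_(m * k) -> {set T}).
Hypotheses (c_clique : forall i, is_clique_of_order adj w (c i))
  (f_inj : injective f) (f_edge : forall j, is_edge adj (f j))
  (f_sub : forall j, f j \subset c (blk j))
  (f_onto : forall i E, is_edge adj E -> E \subset c i -> exists j, blk j = i /\ f j = E).

Lemma card_block_edges_through i x :
  #|[set j | blk j == i & x \in f j]| = ((x \in c i) * (w - 1))%N.
Proof.
have [xc|xNc] := boolP (x \in c i); last first.
  apply/eqP; rewrite cards_eq0; apply/eqP/setP => j; rewrite !inE.
  by apply: contraNF xNc => /andP[/eqP <-]; apply: (subsetP (f_sub j)).
have /andP[/eqP c_card c_compl] := c_clique i.
have pair_inj : {in c i :\ x &, injective (fun y => [set x; y])}.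
  move=> a b; rewrite !inE => /andP[ax _] _ /setP/(_ a).
  by rewrite !inE eqxx orbT (negPf ax) => /esym/eqP.
rewrite mul1n -(card_in_imset (in2W f_inj)) -c_card -[in RHS](setD1K xc).
rewrite cardsU1 !inE eqxx /= add1n subn1 /= -(card_in_imset pair_inj).
apply: eq_card => E; apply/imsetP/imsetP => [[j]|[y]].
  rewrite inE => /andP[/eqP <- xf] ->.
  have /andP[/eqP f_card _] := f_edge j.
  have [y yx f_xy] := cards2_mem f_card xf.
  exists y => //.
  by rewrite !inE yx (subsetP (f_sub j)) // f_xy !inE eqxx orbT.
rewrite !inE => /andP[yx yc] ->.
have xy : x != y by rewrite eq_sym.
have xy_sub : [set x; y] \subset c i by rewrite subUset !sub1set xc yc.
have [j [blk_j f_xy]] := f_onto (edge_of_complete c_compl xc yc xy) xy_sub.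
by exists j; rewrite // inE blk_j eqxx f_xy !inE eqxx.
Qed.

Lemma sum_blk_incidence (R : nzSemiRingType) (g : 'I_m -> R) t :
  \sum_j g (blk j) * (t \in f j)%:R = (\sum_i g i * (t \in c i)%:R) *+ (w - 1).
Proof.
rewrite (partition_big (@blk m k) predT) //= -sumrMnl; apply: eq_bigr => i _.
rewrite (eq_bigr (fun j => if t \in f j then g i else 0)) => [|j /eqP ->]; last first.
  by case: (t \in f j); rewrite ?mulr1 ?mulr0.
rewrite -big_mkcondr sumr_const -cardsE card_block_edges_through.
by case: (t \in c i); rewrite ?mulr1 ?mulr0 ?mul1n ?mul0n ?mul0rn.
Qed.

End CliqueBlocks.
End Cliques.

Lemma six_bin3_plus_two_bin2 w : (6 * 'C(w, 3) + 2 * 'C(w, 2) = (w - 1) ^ 2 * w)%N.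
Proof.
have := bin_ffact w 3; have := bin_ffact w 2.
case: w => [|[|w]]; rewrite ?bin0n // !ffactSS ffactn1 ffactn0 (_ : 3`! = 6) // (_ : 2`! = 2) //.
nia.
Qed.

Theorem lemma3 (R : realFieldType) (T : finType) (adj : rel T) (w m : nat)
  (c : 'I_m -> {set T}) (f : 'I_(m * 'C(w, 2)) -> {set T}) :
  (2 <= w)%N ->
  simple_graph adj ->
  clique_regular adj w ->
  (* c_1, ..., c_m lists the cliques of order w *)
  injective c ->
  (forall i, is_clique_of_order adj w (c i)) ->
  (forall Q : {set T}, is_clique_of_order adj w Q -> exists i, c i = Q) ->
  (* e_1, ..., e_{m C(w,2)} lists the edges, block i = edges of c_i *)
  injective f ->
  (forall j, is_edge adj (f j)) ->
  (forall E : {set T}, is_edge adj E -> exists j, f j = E) ->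
  (forall j, f j \subset c (blk j)) ->
  (forall i (E : {set T}), is_edge adj E -> E \subset c i ->
     exists j, blk j = i /\ f j = E) ->
  forall v : 'cV[R]_m,
    v^T *m ((6 * 'C(w, 3))%:R%:M + ((w - 1) ^ 2)%:R *: inter_adj_mx R c) *m v
    = (phi 'C(w, 2) v)^T *m inter_adj_mx R f *m phi 'C(w, 2) v.
Proof.
move=> _ _ regular c_inj c_clique _ f_inj f_edge _ f_sub f_onto v.
have c_card i : #|c i| = w by have /andP[/eqP] := c_clique i.
have f_card j : #|f j| = 2%N by have /andP[/eqP] := f_edge j.
have c_cardI i i' : i != i' -> (#|c i :&: c i'| <= 1)%N.
  by move=> ii'; apply: cardI_cliques_le1 regular _ _ _; rewrite ?(inj_eq c_inj).
have f_cardI j j' : j != j' -> (#|f j :&: f j'| <= 1)%N.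
  by move=> jj'; rewrite -ltnS; apply: cardI_lt_neq; rewrite ?(inj_eq f_inj).
apply/matrixP => a b; rewrite !ord1 mx_quad_scalarD.
rewrite (quad_inter_adj_mx c_cardI _ c_card) (quad_inter_adj_mx f_cardI _ f_card).
under [in RHS]eq_bigr do under eq_bigr do rewrite mxE.
under [in RHS]eq_bigr do
  rewrite (sum_blk_incidence c_clique f_inj f_edge f_sub f_onto (fun i => v i 0)).
under [X in _ = _ - _ * X]eq_bigr do rewrite mxE.
rewrite (sum_blk _ (fun i => v i 0 ^+ 2)).
under eq_bigr do rewrite -mulr_natr exprMn.
rewrite -mulr_suml.
have bin_id : (6 * 'C(w, 3))%:R = ((w - 1) ^ 2)%:R * w%:R - 2%:R * 'C(w, 2)%:R :> R.
  by rewrite -!natrM -six_bin3_plus_two_bin2 natrD addrK.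
by rewrite bin_id natrX; ring.
Qed.
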